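(* Let $n>2k$, $k\ge t+3$, and let $\mathcal F\subseteq\binom{[n]}{k}$ be a maximal $t$-intersecting family with $\tau_t(\mathcal F)=t+2$ and $\tau_t(\mathcal T_t(\mathcal F))=t+2$. If $\mathcal T_t(\mathcal F)=\binom{Z}{t+2}$ for some $Z\in\binom{[n]}{t+4}$, then: (i) $\mathcal F=\{F\in\binom{[n]}{k}: |F\cap Z|\ge t+2\}$; (ii) $|\mathcal F|>\binom{t+4}{2}\left(\binom{n-t-2}{k-t-2}-2\binom{n-t-3}{k-t-3}\right)$.
   Context: A family is $t$-intersecting if any two members meet in at least $t$ elements. A $t$-cover of a family $\mathcal G$ of subsets of $[n]$ is a set $S\subseteq[n]$ with $|S\cap G|\ge t$ for all $G\in\mathcal G$; $\tau_t(\mathcal G)$ is the minimum size of a $t$-cover, and $\mathcal T_t(\mathcal G)$ is the set of all $t$-covers of $\mathcal G$ of size $\tau_t(\mathcal G)$. A $t$-intersecting $\mathcal F\subseteq\binom{[n]}{k}$ is maximal if no $t$-intersecting subfamily of $\binom{[n]}{k}$ properly contains it. *)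

(* Ground set [n] is modelled as 'I_n. *)
From mathcomp Require Import all_boot all_order all_algebra.
Set Implicit Arguments. Unset Strict Implicit. Unset Printing Implicit Defensive.

Definition ksets (n k : nat) : {set {set 'I_n}} := [set A : {set 'I_n} | #|A| == k].

Definition ksubsets (n : nat) (Z : {set 'I_n}) (k : nat) : {set {set 'I_n}} :=
  [set A : {set 'I_n} | (A \subset Z) && (#|A| == k)].

Definition t_intersecting (n t : nat) (F : {set {set 'I_n}}) : Prop :=
  forall A B, A \in F -> B \in F -> t <= #|A :&: B|.

Definition maximal_t_intersecting (n k t : nat) (F : {set {set 'I_n}}) : Prop :=
  [/\ F \subset ksets n k, t_intersecting t F &
      forall G : {set {set 'I_n}}, G \subset ksets n k -> t_intersecting t G ->
        F \subset G -> G = F].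

Definition is_tcover (n t : nat) (G : {set {set 'I_n}}) (S : {set 'I_n}) : bool :=
  [forall A in G, t <= #|S :&: A|].

(* tau_t(G): minimum size of a t-cover (n.+1 if there is none) *)
Definition tau_t (n t : nat) (G : {set {set 'I_n}}) : nat :=
  \big[minn/n.+1]_(S : {set 'I_n} | is_tcover t G S) #|S|.

Definition Tcov (n t : nat) (G : {set {set 'I_n}}) : {set {set 'I_n}} :=
  [set S : {set 'I_n} | is_tcover t G S && (#|S| == tau_t t G)].

From mathcomp Require Import all_boot all_order all_algebra.
From mathcomp Require Import zify.

Set Implicit Arguments.
Unset Strict Implicit.
Unset Printing Implicit Defensive.

Import Order.TTheory GRing.Theory Num.Theory.

(* Every (t+2)-subset of Z is a t-cover of F.  A member A of F with
   |A ∩ Z| <= t+1 would miss at least 3 points of Z, and a (t+2)-subset of Z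
   using as many of them as possible meets A in at most t-1 points; hence
   F lies in the family H of k-sets meeting Z in at least t+2 points.  Since
   |Z| = t+4, H is t-intersecting, so maximality gives F = H.  The bound
   counts the members of H meeting Z in exactly t+2 points, plus one member
   meeting Z in t+3 points, and uses Pascal's rule twice. *)

Lemma exists_subset_card (T : finType) (A : {set T}) (k : nat) :
  k <= #|A| -> exists2 B : {set T}, B \subset A & #|B| = k.
Proof.
move=> le_kA; have : 0 < #|[set B : {set T} | B \subset A & #|B| == k]|.
  by rewrite cards_draws bin_gt0.
by case/card_gt0P => B; rewrite inE => /andP[sBA /eqP cardB]; exists B.
Qed.

Lemma bigmin_leq (I : eqType) (r : seq I) (P : pred I) (F : I -> nat) i N :
  i \in r -> P i -> \big[minn/N]_(j <- r | P j) F j <= F i.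
Proof.
move=> + Pi; elim: r => // j r IHr; rewrite inE big_cons => /orP[/eqP <-|/IHr].
  by rewrite Pi geq_minl.
by case: (P j) => // le_i; rewrite geq_min le_i orbT.
Qed.

Lemma tau_t_leq n t (G : {set {set 'I_n}}) S : is_tcover t G S -> tau_t t G <= #|S|.
Proof. by move=> covS; apply: bigmin_leq; rewrite ?mem_index_enum. Qed.

Lemma tau_t0 n (G : {set {set 'I_n}}) : tau_t 0 G = 0.
Proof.
have cov0 : is_tcover 0 G set0 by apply/forallP => A; apply/implyP.
by apply/eqP; rewrite -leqn0; have := tau_t_leq cov0; rewrite cards0.
Qed.

Lemma setIU_disjoint_split (T : finType) (Z B C : {set T}) :
  B \subset Z -> C \subset ~: Z -> (B :|: C) :&: Z = B /\ (B :|: C) :\: Z = C.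
Proof.
move=> /subsetP sBZ /subsetP sCZ'; split; apply/setP => x; rewrite !inE;
  move: (sBZ x) (sCZ' x); rewrite inE;
  case: (x \in B); case: (x \in C); case: (x \in Z) => //= BZ CZ';
  by [move: (BZ isT) | move: (CZ' isT)].
Qed.

Definition trace_layer (T : finType) (Z : {set T}) (k r : nat) : {set {set T}} :=
  [set A : {set T} | (#|A| == k) && (#|A :&: Z| == r)].

Lemma card_trace_layer (T : finType) (Z : {set T}) (k r : nat) : r <= k ->
  #|trace_layer Z k r| = 'C(#|Z|, r) * 'C(#|~: Z|, k - r).
Proof.
move=> le_rk.
pose P := setX [set B : {set T} | B \subset Z & #|B| == r]
               [set C : {set T} | C \subset ~: Z & #|C| == k - r].
have memP B C : ((B, C) \in P) = [&& B \subset Z, #|B| == r, C \subset ~: Z & #|C| == k - r].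
  by rewrite !inE -!andbA.
have -> : trace_layer Z k r = (fun p => p.1 :|: p.2) @: P.
  apply/setP => A; apply/idP/imsetP => [|[[B C]]].
    rewrite inE => /andP[/eqP cardA /eqP cardAZ].
    exists (A :&: Z, A :\: Z); last by rewrite setID.
    rewrite memP subsetIr cardAZ cardsD cardA cardAZ !eqxx /=.
    by rewrite setDE subsetIr.
  rewrite memP => /and4P[sBZ /eqP cardB sCZ' /eqP cardC] ->{A} /=.
  have [eB eC] := setIU_disjoint_split sBZ sCZ'.
  by rewrite inE -(cardsID Z) eB eC cardB cardC subnKC ?eqxx.
rewrite card_in_imset ?cardsX ?cards_draws // => [[B1 C1] [B2 C2]].
rewrite !memP => /and4P[sB1Z _ sC1Z' _] /and4P[sB2Z _ sC2Z' _] /= eqU.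
have [eB1 eC1] := setIU_disjoint_split sB1Z sC1Z'.
have [eB2 eC2] := setIU_disjoint_split sB2Z sC2Z'.
by rewrite -eB1 eqU eB2 -eC1 eqU eC2.
Qed.

Lemma leq_cardsI_trace (T : finType) (A B Z : {set T}) :
  #|A :&: Z| + #|B :&: Z| <= #|A :&: B| + #|Z|.
Proof.
rewrite -cardsUI addnC leq_add //; apply: subset_leq_card.
  by apply/subsetP => x; rewrite !inE => /andP[/andP[-> _] /andP[-> _]].
by rewrite subUset !subsetIr.
Qed.

(* The witness takes as many points of Z :\: A as fit and fills up inside A,
   so it meets A in the truncated difference s - #|Z :\: A|; 0 < t then rules
   out #|Z :\: A| >= s. *)
Lemma ksubset_cover_trace (T : finType) (A Z : {set T}) (s t : nat) :
  0 < t -> s <= #|Z| ->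
  (forall S : {set T}, S \subset Z -> #|S| = s -> t <= #|S :&: A|) ->
  t + #|Z :\: A| <= s.
Proof.
move=> t_gt0 le_sZ coverA.
have [D sD cardD] := exists_subset_card (geq_minr s #|Z :\: A|).
have [E sE cardE] : exists2 E : {set T}, E \subset Z :&: A & #|E| = s - minn s #|Z :\: A|.
  by apply: exists_subset_card; move: le_sZ; rewrite -(cardsID A Z); lia.
have sEA : E \subset A := subset_trans sE (subsetIr Z A).
have sDA' : D \subset ~: A by rewrite (subset_trans sD) // setDE subsetIr.
have [eE eD] := setIU_disjoint_split sEA sDA'.
have := coverA (E :|: D).
rewrite eE subUset (subset_trans sE (subsetIl Z A)) (subset_trans sD (subsetDl Z A)).
by rewrite -(cardsID A) eE eD cardD cardE; lia.
Qed.

Lemma bin_SS_leq m j : 'C(m.+2, j.+1) <= 'C(m, j.+1) + 2 * 'C(m.+1, j).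
Proof. by rewrite !binS; have := leq_bin2l j (leqnSn m); lia. Qed.

Definition large_trace (T : finType) (Z : {set T}) (k r : nat) : {set {set T}} :=
  [set A : {set T} | (#|A| == k) && (r <= #|A :&: Z|)].

Lemma card_large_trace_gt (n k t : nat) (Z : {set 'I_n}) :
  2 * k < n -> t + 3 <= k -> #|Z| = t + 4 ->
  (Posz 'C(t + 4, 2) * (Posz 'C(n - t - 2, k - t - 2) - 2 * Posz 'C(n - t - 3, k - t - 3))
     < Posz #|large_trace Z k (t + 2)|)%R.
Proof.
move=> lt_2k_n le_t3_k cardZ.
have cardZ' : #|~: Z| = n - t - 4 by rewrite cardsCs setCK card_ord cardZ; lia.
have card2 : #|trace_layer Z k (t + 2)| = 'C(t + 4, 2) * 'C(n - t - 4, k - t - 2).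
  have bin_t4 : 'C(t + 4, t + 2) = 'C(t + 4, 2) by rewrite -bin_sub ?subnDl ?leq_add2l.
  by rewrite card_trace_layer ?cardZ ?cardZ' ?bin_t4 ?subnDA; lia.
have card3_gt0 : 0 < #|trace_layer Z k (t + 3)|.
  by rewrite card_trace_layer ?muln_gt0 ?bin_gt0 ?cardZ ?cardZ'; lia.
have disj23 : [disjoint trace_layer Z k (t + 2) & trace_layer Z k (t + 3)].
  apply/pred0P => A /=; rewrite !inE; apply/negbTE/negP.
  by case/andP => /andP[_ /eqP->] /andP[_ /eqP]; lia.
have sub23 : trace_layer Z k (t + 2) :|: trace_layer Z k (t + 3) \subset large_trace Z k (t + 2).
  apply/subsetP => A; rewrite !inE.
  by case/orP => /andP[cardA /eqP->]; rewrite cardA; lia.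
have lower : 'C(t + 4, 2) * 'C(n - t - 4, k - t - 2) < #|large_trace Z k (t + 2)|.
  have := subset_leq_card sub23.
  by rewrite cardsU (disjoint_setI0 disj23) cards0 subn0 card2; lia.
have pascal : 'C(n - t - 2, k - t - 2) <= 'C(n - t - 4, k - t - 2) + 2 * 'C(n - t - 3, k - t - 3).
  have -> : n - t - 2 = (n - t - 4).+2 by lia.
  have -> : n - t - 3 = (n - t - 4).+1 by lia.
  by rewrite (_ : k - t - 2 = (k - t - 3).+1) ?bin_SS_leq; lia.
have le_diff : (Posz 'C(n - t - 2, k - t - 2) - 2 * Posz 'C(n - t - 3, k - t - 3)
                 <= Posz 'C(n - t - 4, k - t - 2))%R by lia.
apply: le_lt_trans (ler_wpM2l (le0z_nat _) le_diff) _.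
by rewrite -PoszM ltz_nat.
Qed.

Theorem lemma2p11 (n k t : nat) (F : {set {set 'I_n}}) (Z : {set 'I_n}) :
  2 * k < n -> t + 3 <= k ->
  maximal_t_intersecting k t F ->
  tau_t t F = t + 2 ->
  tau_t t (Tcov t F) = t + 2 ->
  #|Z| = t + 4 ->
  Tcov t F = ksubsets Z (t + 2) ->
  F = [set A : {set 'I_n} | (#|A| == k) && (t + 2 <= #|A :&: Z|)] /\
  (Posz 'C(t + 4, 2) * (Posz 'C(n - t - 2, k - t - 2) - 2 * Posz 'C(n - t - 3, k - t - 3))
     < Posz #|F|)%R.
Proof.
move=> lt_2k_n le_t3_k [sFK _ Fmax] tauF _ cardZ TcovF.
have t_gt0 : 0 < t by case: (posnP t) => [t0|//]; move: tauF; rewrite t0 tau_t0.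
have sFH : F \subset large_trace Z k (t + 2).
  apply/subsetP => A FA.
  have le_tZ : t + 2 <= #|Z| by rewrite cardZ leq_add2l.
  have cover : t + #|Z :\: A| <= t + 2.
    apply: ksubset_cover_trace t_gt0 le_tZ _ => S sSZ cardS.
    have : S \in Tcov t F by rewrite TcovF inE sSZ cardS eqxx.
    by rewrite inE => /andP[/forallP/(_ A)/implyP/(_ FA)].
  have traceA : t + 2 <= #|A :&: Z| by rewrite setIC; have := cardsID A Z; lia.
  by move: (subsetP sFK A FA); rewrite !inE traceA andbT.
have eqHF : large_trace Z k (t + 2) = F.
  apply: Fmax => //; first by apply/subsetP => A; rewrite !inE => /andP[-> _].
  move=> A1 A2; rewrite !inE => /andP[_ traceA1] /andP[_ traceA2].
  by have := leq_cardsI_trace A1 A2 Z; lia.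
by rewrite -eqHF; split=> //; apply: card_large_trace_gt.
Qed.
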